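(* For every $r\in(0,\tfrac12]$ there exist a constant $C_r>0$ and infinitely many integers $N$ such that there is an ORN design on $N$ nodes that guarantees throughput $r$ and has maximum latency at most $C_r\,L^*(r,N)$.
   Context: Nodes are $[N]=\{1,\dots,N\}$. A connection schedule of size $N$ and period $T\ge1$ is a sequence of permutations $\pi_0,\dots,\pi_{T-1}$ of $[N]$; write $\pi_t=\pi_{t \bmod T}$ for all $t\in\mathbb Z$. Its virtual topology is the directed graph $G$ with vertex set $[N]\times\mathbb Z$ whose edges are the virtual edges $(i,t)\to(i,t+1)$ and the physical edges $(i,t)\to(\pi_t(i),t+1)$, for all $i\in[N]$, $t\in\mathbb Z$. The latency of a finite directed path in $G$ is its number of edges. For $a,b\in[N]$, $t\in\mathbb Z$, $\mathcal P(a,b,t)$ is the set of paths in $G$ from $(a,t)$ to some vertex $(b,t')$, and $\mathcal P$ is the set of all paths. A flow is a function $f:\mathcal P\to[0,\infty)$; the load on an edge $e$ is $F(f,e)=\sum_{P\ni e}f(P)$; $f$ is feasible if $F(f,e)\le 1$ for every physical edge $e$. An oblivious routing scheme $R$ assigns to each $(a,b,t)\in[N]\times[N]\times\mathbb Z$ a flow $R_{a,b,t}$ supported on $\mathcal P(a,b,t)$ with $\sum_P R_{a,b,t}(P)=1$, which is periodic: $R_{a,b,t+T}$ is obtained from $R_{a,b,t}$ by shifting every path by $T$ in the time coordinate. An ORN design on $N$ nodes is a connection schedule together with an oblivious routing scheme on its virtual topology; its maximum latency is the maximum latency of a path $P$ with $R_{a,b,t}(P)>0$ for some $a,b,t$.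 A demand function $D$ assigns to each $t\in\mathbb Z$ an $N\times N$ matrix $D(t)$ with nonnegative entries $D(t,a,b)$; it requests throughput equal to the supremum over $t$ of the maximum row sum or column sum of $D(t)$. The induced flow is $f(R,D)=\sum_{a,b,t}D(t,a,b)R_{a,b,t}$. The design guarantees throughput $r$ if $f(R,D)$ is feasible for every demand function $D$ requesting throughput at most $r$. For $r\in(0,\frac12]$, $(h,\varepsilon)$ denotes the unique solution in $\mathbb N\times(0,1]$ of $\frac1{2r}=h+1-\varepsilon$ (equivalently $h=\lfloor\frac1{2r}\rfloor$, $\varepsilon=h+1-\frac1{2r}$), and $L^*(r,N)=h\left(N^{1/(h+1)}+(\varepsilon N)^{1/h}\right)$. *)

From HB Require Import structures.
From mathcomp Require Import all_boot all_order all_algebra all_fingroup.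
From mathcomp Require Import all_classical all_reals all_analysis.
Set Implicit Arguments. Unset Strict Implicit. Unset Printing Implicit Defensive.
Import Order.TTheory GRing.Theory Num.Theory.
Local Open Scope classical_set_scope.
Local Open Scope ring_scope.

(* Nodes are 'I_N (i.e. [N] shifted to {0..N-1}); time is int.
   A connection schedule is a map  sched : int -> {perm 'I_N}  that is
   T-periodic with T >= 1 (i.e. sched t = pi_(t mod T)). *)
Definition is_schedule (N T : nat) (sched : int -> {perm 'I_N}) : Prop :=
  (0 < T)%N /\ forall t : int, sched (t + T%:Z) = sched t.

(* An edge of the virtual topology, written (i, t, phys): it goes out of
   vertex (i,t); if phys = true it is the physical edge (i,t) -> (pi_t i, t+1),
   otherwise it is the virtual edge (i,t) -> (i,t+1). *)
Definition edge (N : nat) := ('I_N * int * bool)%type.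

(* A finite directed path in G: its start vertex (i,t) and the sequence of
   edge kinds it takes (true = physical, false = virtual). *)
Definition vpath (N : nat) := ('I_N * int * seq bool)%type.

Fixpoint walk_edges N (sched : int -> {perm 'I_N}) (i : 'I_N) (t : int)
    (st : seq bool) : seq (edge N) :=
  match st with
  | [::] => [::]
  | b :: st' => (i, t, b) :: walk_edges sched (if b then sched t i else i) (t + 1) st'
  end.

Fixpoint walk_end N (sched : int -> {perm 'I_N}) (i : 'I_N) (t : int)
    (st : seq bool) : 'I_N :=
  match st with
  | [::] => i
  | b :: st' => walk_end sched (if b then sched t i else i) (t + 1) st'
  end.

Definition path_edges N (sched : int -> {perm 'I_N}) (P : vpath N) : seq (edge N) :=
  walk_edges sched P.1.1 P.1.2 P.2.

Definition latency N (P : vpath N) : nat := size P.2.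

Definition in_paths N (sched : int -> {perm 'I_N}) (a b : 'I_N) (t : int)
    (P : vpath N) : Prop :=
  P.1.1 = a /\ P.1.2 = t /\ walk_end sched P.1.1 P.1.2 P.2 = b.

Definition shift_path N (T : nat) (P : vpath N) : vpath N :=
  (P.1.1, P.1.2 + T%:Z, P.2).

Definition is_routing (R : realType) N (T : nat) (sched : int -> {perm 'I_N})
    (Rt : 'I_N -> 'I_N -> int -> vpath N -> R) : Prop :=
  [/\ (forall a b t P, 0 <= Rt a b t P),
      (forall a b t P, 0 < Rt a b t P -> in_paths sched a b t P),
      (forall a b t, (\esum_(P in [set: vpath N]) (Rt a b t P)%:E = 1)%E) &
      (forall a b t P, Rt a b (t + T%:Z) (shift_path T P) = Rt a b t P)].

Definition is_ORN_design (R : realType) N (T : nat) (sched : int -> {perm 'I_N})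
    (Rt : 'I_N -> 'I_N -> int -> vpath N -> R) : Prop :=
  is_schedule T sched /\ is_routing T sched Rt.

Definition max_latency_le (R : realType) N (Rt : 'I_N -> 'I_N -> int -> vpath N -> R)
    (L : R) : Prop :=
  forall a b t P, 0 < Rt a b t P -> (latency P)%:R <= L.

Definition demand_at_most (R : realType) N (D : int -> 'I_N -> 'I_N -> R) (r : R) : Prop :=
  [/\ (forall t a b, 0 <= D t a b),
      (forall t a, \sum_(b < N) D t a b <= r) &
      (forall t b, \sum_(a < N) D t a b <= r)].

Definition induced_flow (R : realType) N (Rt : 'I_N -> 'I_N -> int -> vpath N -> R)
    (D : int -> 'I_N -> 'I_N -> R) (P : vpath N) : \bar R :=
  \esum_(x in [set: 'I_N * 'I_N * int]) (D x.2 x.1.1 x.1.2 * Rt x.1.1 x.1.2 x.2 P)%:E.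

Definition load (R : realType) N (sched : int -> {perm 'I_N})
    (f : vpath N -> \bar R) (e : edge N) : \bar R :=
  \esum_(P in [set P : vpath N | e \in path_edges sched P]) f P.

Definition feasible (R : realType) N (sched : int -> {perm 'I_N})
    (f : vpath N -> \bar R) : Prop :=
  forall (i : 'I_N) (t : int), (load sched f (i, t, true) <= 1)%E.

Definition guarantees_throughput (R : realType) N (sched : int -> {perm 'I_N})
    (Rt : 'I_N -> 'I_N -> int -> vpath N -> R) (r : R) : Prop :=
  forall D : int -> 'I_N -> 'I_N -> R,
    demand_at_most D r -> feasible sched (induced_flow Rt D).

Definition hr (R : realType) (r : R) : nat := Num.truncn (1 / (2 * r)).
Definition epsr (R : realType) (r : R) : R := (hr r)%:R + 1 - 1 / (2 * r).
Definition Lstar (R : realType) (r : R) (N : nat) : R :=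
  (hr r)%:R * (powR (N%:R) ((hr r).+1%:R)^-1 + powR (epsr r * N%:R) ((hr r)%:R)^-1).

From HB Require Import structures.
From mathcomp Require Import all_boot all_order all_algebra all_fingroup.
From mathcomp Require Import all_classical all_reals all_analysis.
From mathcomp Require Import ring lra.
Import Order.TTheory GRing.Theory Num.Theory.

Set Implicit Arguments. Unset Strict Implicit. Unset Printing Implicit Defensive.
Local Open Scope ring_scope.

(* Valiant load balancing on the discrete torus (Z/m)^h, whose N = m^h points
   label the nodes.  During each period of T = h m steps the schedule applies
   every elementary hop "add s to coordinate j" once, so a walk that takes
   exactly the hops selected by a displacement x moves by x in one period.  A
   packet from a to b picks x uniformly, moves by x in the first period and by
   b - a - x in the second, hence has latency 2hm.  For a fixed physical edge
   at time t and a fixed departure delay k < 2T, only the fraction 1/m of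
   displacements selecting the hop at t can use the edge, and given such a
   displacement the edge determines the source (first phase) or the destination
   (second phase); row resp. column sums of the demand bound the load of each
   delay by r/m, and the total load by 2Tr/m = 2hr <= 1.  Since N^(1/h) = m,
   the latency 2hm is at most (2 / eps^(1/h)) L*(r, N) for h = h(r). *)

Section esum_finite.
Variable R : realType.
Local Open Scope ereal_scope.

Lemma esum_point_masses (T : choiceType) (X : finType) (S : set T)
    (p : X -> T) (c : X -> R) : (forall x, (0 <= c x)%R) ->
  \esum_(y in S) (\sum_(x : X) c x * (y == p x)%:R)%:E =
  (\sum_(x : X) c x * (p x \in S)%:R)%:E.
Proof.
move=> c0; under eq_esum => y _ do rewrite -sumEFin.
rewrite esum_sum => [|y x _ _]; last by rewrite lee_fin mulr_ge0.
rewrite -sumEFin; apply: eq_bigr => x _.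
rewrite esum_mkcond (eq_esum (b := fun y => if y \in [set p x]%classic then
    (c x * (p x \in S)%:R)%:E else 0)) => [|y _]; last first.
  by rewrite in_set1; case: eqP => [->|_]; case: (_ \in S); rewrite ?mulr1 ?mulr0.
by rewrite -esum_mkcond esum_set1 // lee_fin mulr_ge0.
Qed.

Lemma exchange_esum (T1 T2 : choiceType) (I : set T1) (J : set T2)
    (a : T1 -> T2 -> \bar R) : (forall i j, 0 <= a i j) ->
  \esum_(i in I) \esum_(j in J) a i j = \esum_(j in J) \esum_(i in I) a i j.
Proof.
move=> a0; rewrite (esum_esum (J := fun=> J)) // (esum_esum (J := fun=> I)) //.
rewrite (reindex_esum (J `*`` fun=> I) _ (fun x => (x.2, x.1))) //.
split=> //=.
- by move=> [i j] [/= ? ?].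
- by move=> [i1 i2] [j1 j2] /= _ _ [] -> ->.
- by move=> [i1 i2] [? ?] /=; exists (i2, i1).
Qed.

Lemma esum_finite_support (T : choiceType) (I : finType) (g : I -> T)
    (a : T -> \bar R) : injective g -> (forall y, 0 <= a y) ->
  (forall y, ~ range g y -> a y = 0) ->
  \esum_(y in [set: T]) a y = \sum_(i : I) a (g i).
Proof.
move=> g_inj a0 a_out.
rewrite (eq_esum (b := fun y => if y \in range g then a y else 0)); last first.
  by move=> y _; case: ifPn => // /negP gy; rewrite a_out // => /mem_set.
rewrite -esum_mkcond esum_image; last by move=> i j _ _; apply: g_inj.
rewrite esum_fset //; last exact: finite_finset.
rewrite (fsbigE (enum I)) ?enum_uniq // => [|i _]; last by rewrite mem_enum.
by rewrite big_enum_cond /=; apply: eq_bigl => i; rewrite in_setT.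
Qed.

End esum_finite.

Lemma sum_ord_rot (V : nmodType) (n u : nat) (F : nat -> V) : (0 < n)%N ->
  \sum_(k < n) F ((u + k) %% n)%N = \sum_(k < n) F k.
Proof.
move=> n_gt0; pose rot (k : 'I_n) : 'I_n := Ordinal (ltn_pmod (u + k) n_gt0).
have rot_inj : injective rot.
  move=> k1 k2 /(congr1 val) /= /eqP; rewrite eqn_modDl !modn_small // => /eqP.
  exact: val_inj.
by rewrite [RHS](reindex_inj rot_inj).
Qed.

Lemma card_ffun_fiber (A B : finType) (a : A) (b : B) :
  (#|[pred x : {ffun A -> B} | x a == b]| * #|B|)%N = #|{ffun A -> B}|.
Proof.
pose F (k : A) : pred B := if k == a then pred1 b else predT.
have -> : #|[pred x : {ffun A -> B} | x a == b]| = #|family F|.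
  apply: eq_card => x; rewrite !inE; apply/idP/familyP => [/eqP xa k|/(_ a)].
    by rewrite /F; case: eqP => [->|]; rewrite ?xa /= ?inE.
  by rewrite /F eqxx.
rewrite card_family card_ffun foldrE big_map big_enum /= (bigD1 a) //= /F eqxx.
rewrite (eq_bigr (fun _ => #|B|)) => [|k /negbTE ->] //.
rewrite card1 mul1n prod_nat_const -expnSr [in RHS](cardD1 a) inE add1n.
by congr (_ ^ _.+1)%N; apply: eq_card => k; rewrite !inE andbT.
Qed.

Lemma demand_fiber_le (R : numDomainType) (X : finType) (n : nat)
    (D : 'I_n -> 'I_n -> R) (r : R) (E : 'I_n -> 'I_n -> X -> bool)
    (p : pred X) (f : X -> 'I_n) :
  0 <= r -> (forall a b, 0 <= D a b) -> (forall a, \sum_b D a b <= r) ->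
  (forall a b x, E a b x -> p x && (a == f x)) ->
  \sum_a \sum_b \sum_(x : X) D a b * (E a b x)%:R <= r * #|p|%:R.
Proof.
move=> r_ge0 D_ge0 D_row E_fiber; pose c a x : R := (p x && (a == f x))%:R.
have c_ge0 a x : 0 <= c a x by rewrite ler0n.
apply: (@le_trans _ _ (\sum_a \sum_b \sum_(x : X) D a b * c a x)).
  apply: ler_sum => a _; apply: ler_sum => b _; apply: ler_sum => x _.
  apply: ler_wpM2l => //; case: (boolP (E a b x)) => [/E_fiber|_]; last exact: c_ge0.
  by rewrite /c => ->.
apply: (@le_trans _ _ (\sum_a \sum_(x : X) r * c a x)).
  apply: ler_sum => a _; rewrite exchange_big /=; apply: ler_sum => x _.
  by rewrite -mulr_suml ler_wpM2r.
rewrite exchange_big /=; under eq_bigr do rewrite -mulr_sumr.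
rewrite -mulr_sumr -sum1_card natr_sum.
apply: ler_wpM2l => //; rewrite [leRHS]big_mkcond; apply: ler_sum => x _.
rewrite (bigD1 (f x)) //= /c eqxx andbT big1 => [|a /negbTE ->]; last by rewrite andbF.
by rewrite addr0 unfold_in; case: (p x).
Qed.

Section TorusDesign.
Variables h' m' : nat.
Local Notation h := h'.+1.
Local Notation m := m'.+1.

Definition torus := {ffun 'I_h -> 'I_m}.
Local Notation N := #|torus|.

Definition period := (h * m)%N.

Definition label (i : 'I_N) : torus := enum_val i.
Definition node (g : torus) : 'I_N := enum_rank g.

Lemma labelK : cancel label node. Proof. exact: enum_valK. Qed.
Lemma nodeK : cancel node label. Proof. exact: enum_rankK. Qed.
Lemma label_inj : injective label. Proof. exact: can_inj labelK. Qed.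

Lemma card_torus : N = (m ^ h)%N.
Proof. by rewrite card_ffun !card_ord. Qed.

Lemma card_torus_gt0 : (0 < N)%N.
Proof. by rewrite card_torus expn_gt0. Qed.

Lemma period_gt0 : (0 < period)%N. Proof. by rewrite muln_gt0. Qed.

Definition phase (t : int) : nat := absz (t %% period%:Z)%Z.
Definition hop_coord (u : nat) : 'I_h := inord (u %/ m).
Definition hop_value (u : nat) : 'I_m := inord (u %% m).
(* At phase j * m + s of the period, every node moves by s along coordinate j. *)
Definition hop (u : nat) : torus :=
  [ffun j => if j == hop_coord u then hop_value u else 0].

Definition translate (g : torus) (i : 'I_N) : 'I_N := node (label i + g).

Lemma translate_inj g : injective (translate g).
Proof. by move=> i j /(congr1 label); rewrite !nodeK => /addIr /label_inj. Qed.

Definition torus_sched (t : int) : {perm 'I_N} :=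
  perm (@translate_inj (hop (phase t))).

Definition uses_hop (t : int) (x : torus) : bool :=
  x (hop_coord (phase t)) == hop_value (phase t).

Fixpoint hop_bits (t : int) (x : torus) (n : nat) : seq bool :=
  if n is n'.+1 then uses_hop t x :: hop_bits (t + 1) x n' else [::].

Fixpoint displacement (t : int) (st : seq bool) : torus :=
  if st is b :: st' then (if b then hop (phase t) else 0) + displacement (t + 1) st'
  else 0.

(* Edge kinds of the walk that moves by x during the period starting at t and
   then by label b - label a - x during the next period. *)
Definition vlb_path (a b : 'I_N) (t : int) (x : torus) : vpath N :=
  (a, t, hop_bits t x period ++ hop_bits (t + period%:Z) (label b - label a - x) period).

Lemma addzS (t : int) (k : nat) : t + k.+1%:Z = t + 1 + k%:Z.
Proof. by rewrite -addn1 PoszD addrA addrAC. Qed.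

Lemma label_torus_sched t i : label (torus_sched t i) = label i + hop (phase t).
Proof. by rewrite permE /translate nodeK. Qed.

Lemma label_walk_end i t st :
  label (walk_end torus_sched i t st) = label i + displacement t st.
Proof.
elim: st i t => [|b st IH] i t /=; first by rewrite addr0.
by rewrite IH; case: b; rewrite ?label_torus_sched ?add0r ?addrA.
Qed.

Lemma mem_walk_edges i t st i' t' :
  (i', t', true) \in walk_edges torus_sched i t st ->
  exists2 k, (k < size st)%N &
    [/\ nth false st k, t' = t + k%:Z & label i' = label i + displacement t (take k st)].
Proof.
elim: st i t => [|b st IH] i t //=; rewrite in_cons => /orP[/eqP [-> -> <-]|].
  by exists 0%N => //; split; rewrite ?addr0.
move=> /IH [k k_lt [st_k -> ->]]; exists k.+1 => //; split => //.
  by rewrite addzS.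
by case: b; rewrite /= ?label_torus_sched ?add0r ?addrA.
Qed.

Lemma displacement_cat t st1 st2 :
  displacement t (st1 ++ st2) = displacement t st1 + displacement (t + (size st1)%:Z) st2.
Proof.
elim: st1 t => [|b st IH] t /=; first by rewrite add0r addr0.
by rewrite IH addzS addrA.
Qed.

Lemma size_hop_bits t x n : size (hop_bits t x n) = n.
Proof. by elim: n t => //= n IH t; rewrite IH. Qed.

Lemma nth_hop_bits t x n k : (k < n)%N -> nth false (hop_bits t x n) k = uses_hop (t + k%:Z) x.
Proof.
elim: n t k => // n IH t [|k] /= k_lt; first by rewrite addr0.
by rewrite IH // addzS.
Qed.

Lemma displacement_hop_bits t x n : displacement t (hop_bits t x n) =
  \sum_(k < n) (if uses_hop (t + k%:Z) x then hop (phase (t + k%:Z)) else 0).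
Proof.
elim: n t => [|n IH] t /=; first by rewrite big_ord0.
rewrite big_ord_recl /= addr0 IH; congr (_ + _); apply: eq_bigr => k _.
by rewrite /bump /= add1n addzS.
Qed.

Lemma phaseE t : (phase t)%:Z = (t %% period%:Z)%Z.
Proof. by rewrite /phase gez0_abs // modz_ge0. Qed.

Lemma phaseD t (k : nat) : phase (t + k%:Z) = ((phase t + k) %% period)%N.
Proof. by apply/eqP; rewrite -eqz_nat phaseE -modz_nat PoszD phaseE modzDml. Qed.

Lemma phase_periodic t : phase (t + period%:Z) = phase t.
Proof. by apply/eqP; rewrite -eqz_nat !phaseE modzDr. Qed.

Lemma hop_coordE u : (u < period)%N -> hop_coord u = (u %/ m)%N :> nat.
Proof. by move=> u_lt; rewrite /hop_coord inordK // ltn_divLR // mulnC. Qed.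

Lemma hop_valueE u : hop_value u = (u %% m)%N :> nat.
Proof. by rewrite /hop_value inordK // ltn_pmod. Qed.

(* The phases of a period enumerate the pairs (j, s) as j * m + s, each once. *)
Lemma sum_selected_hops (x : torus) :
  \sum_(u < period) (if x (hop_coord u) == hop_value u then hop u else 0) = x.
Proof.
apply/ffunP => j; rewrite sum_ffunE.
have u_lt : (j * m + x j < period)%N.
  apply: (@leq_trans (j.+1 * m)); first by rewrite mulSn addnC ltn_add2r.
  by rewrite leq_mul2r ltn_ord orbT.
have coord_u : hop_coord (j * m + x j) = j.
  by apply: val_inj; rewrite /= hop_coordE // divnMDl // divn_small // addn0.
have value_u : hop_value (j * m + x j) = x j.
  by apply: val_inj; rewrite /= hop_valueE modnMDl modn_small.
rewrite (bigD1 (Ordinal u_lt)) //= coord_u value_u eqxx ffunE coord_u eqxx.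
rewrite big1 ?addr0 // => u u_neq; case: ifP => [/eqP xu|_]; last by rewrite ffunE.
rewrite ffunE; case: ifP => // /eqP ju; case/eqP: u_neq; apply: val_inj => /=.
by rewrite [LHS](divn_eq u m) -(@hop_coordE u (ltn_ord u)) -hop_valueE -xu -ju.
Qed.

Lemma displacement_period t x : displacement t (hop_bits t x period) = x.
Proof.
rewrite displacement_hop_bits /uses_hop; under eq_bigr => k _ do rewrite phaseD.
rewrite (@sum_ord_rot _ _ _ (fun u => if x (hop_coord u) == hop_value u then hop u else 0)).
  exact: sum_selected_hops.
exact: period_gt0.
Qed.

Lemma hop_bits_periodic t x n : hop_bits (t + period%:Z) x n = hop_bits t x n.
Proof. by elim: n t => //= n IH t; rewrite /uses_hop phase_periodic addrAC IH. Qed.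

Lemma torus_sched_periodic t : torus_sched (t + period%:Z) = torus_sched t.
Proof. by apply/permP => i; rewrite !permE /translate phase_periodic. Qed.

Lemma vlb_path_end a b t x : walk_end torus_sched a t (vlb_path a b t x).2 = b.
Proof.
apply: label_inj; rewrite label_walk_end displacement_cat size_hop_bits.
by rewrite !displacement_period [x + _]addrC subrK addrC subrK.
Qed.

Lemma vlb_path_periodic a b t x :
  vlb_path a b (t + period%:Z) x = shift_path period (vlb_path a b t x).
Proof. by rewrite /vlb_path /shift_path !hop_bits_periodic. Qed.

Lemma shift_path_inj T : injective (@shift_path N T).
Proof. by move=> [[i1 t1] s1] [[i2 t2] s2] [-> /addIr -> ->]. Qed.

Lemma vlb_path_edge_delay i t a b t0 x :
  (i, t, true) \in path_edges torus_sched (vlb_path a b t0 x) ->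
  exists2 k, (k < period + period)%N & t0 = t - k%:Z.
Proof.
move=> /mem_walk_edges [k]; rewrite size_cat !size_hop_bits => k_lt [_ -> _].
by exists k => //; rewrite addrK.
Qed.

Lemma vlb_path_edge_at i t a b k x
    (st := hop_bits (t - k%:Z) x period ++
           hop_bits (t - k%:Z + period%:Z) (label b - label a - x) period) :
  (i, t, true) \in path_edges torus_sched (vlb_path a b (t - k%:Z) x) ->
  [/\ (k < period + period)%N, nth false st k &
      label i = label a + displacement (t - k%:Z) (take k st)].
Proof.
move=> /mem_walk_edges [k']; rewrite size_cat !size_hop_bits => k'_lt [st_k' t_k'].
suff [k'_eq] : k'%:Z = k%:Z by subst k'; split.
by apply: (addrI (t - k%:Z)); rewrite -t_k' subrK.
Qed.

Definition displacement_prefix (t : int) (k : nat) (x : torus) : torus :=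
  displacement t (take k (hop_bits t x period)).

Lemma first_phase_edge i t a b k x : (k < period)%N ->
  (i, t, true) \in path_edges torus_sched (vlb_path a b (t - k%:Z) x) ->
  uses_hop t x &&
  (a == node (label i - displacement_prefix (t - k%:Z) k x)).
Proof.
move=> k_lt /vlb_path_edge_at [_]; rewrite nth_cat take_cat size_hop_bits k_lt.
by rewrite nth_hop_bits // subrK => -> ->; rewrite addrK labelK eqxx.
Qed.

Lemma second_phase_edge i t a b k x (y := label b - label a - x) : (period <= k)%N ->
  (i, t, true) \in path_edges torus_sched (vlb_path a b (t - k%:Z) x) ->
  uses_hop t y &&
  (b == node (label i + y - displacement_prefix (t - k%:Z + period%:Z) (k - period) y)).
Proof.
move=> k_ge /vlb_path_edge_at [k_lt]; have k_sub_lt : (k - period < period)%N by rewrite ltn_subLR.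
have k_ltF : (k < period)%N = false by rewrite ltnNge k_ge.
rewrite nth_cat take_cat !size_hop_bits k_ltF nth_hop_bits //.
rewrite displacement_cat size_hop_bits displacement_period.
have -> : t - k%:Z + period%:Z + (k - period)%N%:Z = t by rewrite -subzn //; ring.
set d := displacement _ _; move=> -> ->; rewrite andTb; apply/eqP/label_inj.
rewrite nodeK [label a + (x + d) + _]addrAC [_ + (x + d)]addrA addrK.
by rewrite /y -addrA subrK addrC subrK.
Qed.

Section Routing.
Variable R : realType.

Definition vlb_routing (a b : 'I_N) (t : int) (P : vpath N) : R :=
  \sum_(x : torus) N%:R^-1 * (P == vlb_path a b t x)%:R.

Lemma vlb_routing_ge0 a b t P : 0 <= vlb_routing a b t P.
Proof. by apply: sumr_ge0 => x _; rewrite mulr_ge0 // invr_ge0. Qed.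

Lemma vlb_routing_support a b t P :
  0 < vlb_routing a b t P -> exists x, P = vlb_path a b t x.
Proof.
move=> R_gt0; apply: contrapT => P_out; move: R_gt0; rewrite /vlb_routing big1 ?ltxx //.
by move=> x _; case: eqP => [P_x|]; [case: P_out; exists x | rewrite mulr0].
Qed.

Lemma vlb_routing_mass a b t :
  (\esum_(P in [set: vpath N]) (vlb_routing a b t P)%:E = 1)%E.
Proof.
rewrite esum_point_masses => [|x]; last by rewrite invr_ge0.
under eq_bigr do rewrite in_setT mulr1.
rewrite sumr_const; change (((N%:R : R)^-1 *+ N)%:E = 1%E).
by rewrite -[_ *+ _]mulr_natr mulVf // pnatr_eq0 -lt0n card_torus_gt0.
Qed.

Lemma vlb_routing_periodic a b t P :
  vlb_routing a b (t + period%:Z) (shift_path period P) = vlb_routing a b t P.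
Proof. by apply: eq_bigr => x _; rewrite vlb_path_periodic (inj_eq (@shift_path_inj _)). Qed.

Lemma torus_is_ORN_design : is_ORN_design period torus_sched vlb_routing.
Proof.
split; first by split; [exact: period_gt0 | exact: torus_sched_periodic].
split.
- exact: vlb_routing_ge0.
- by move=> a b t P /vlb_routing_support [x ->]; split => //; split => //; exact: vlb_path_end.
- exact: vlb_routing_mass.
- exact: vlb_routing_periodic.
Qed.

Lemma vlb_routing_latency : max_latency_le vlb_routing (period + period)%:R.
Proof.
move=> a b t P /vlb_routing_support [x ->].
by rewrite /latency size_cat !size_hop_bits.
Qed.

(* Edges of the first phase are counted along the rows of D, those of the second
   phase, after substituting the second displacement for x, along its columns. *)
Lemma load_at_delay_le (D : 'I_N -> 'I_N -> R) (r : R) i t k :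
  0 <= r -> (forall a b, 0 <= D a b) ->
  (forall a, \sum_b D a b <= r) -> (forall b, \sum_a D a b <= r) ->
  \sum_a \sum_b \sum_(x : torus) D a b *
    ((i, t, true) \in path_edges torus_sched (vlb_path a b (t - k%:Z) x))%:R
  <= r * #|[pred x | uses_hop t x]|%:R.
Proof.
move=> r_ge0 D_ge0 D_row D_col; case: (ltnP k period) => [k_lt|k_ge].
  by apply: demand_fiber_le => // a b x; apply: first_phase_edge.
rewrite exchange_big /=.
under eq_bigr => b _ do under eq_bigr => a _ do
  rewrite (reindex_inj (inv_inj (subKr (label b - label a)))) /=.
apply: (@demand_fiber_le _ _ _ (fun b a => D a b) _ _ _ (fun y =>
  node (label i + y - displacement_prefix (t - k%:Z + period%:Z) (k - period) y))) => // b a y.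
by move/second_phase_edge => /(_ k_ge); rewrite subKr.
Qed.

Lemma card_uses_hop t : (#|[pred x | uses_hop t x]| * m)%N = N.
Proof.
by rewrite -(card_ffun_fiber (hop_coord (phase t)) (hop_value (phase t))) card_ord.
Qed.

Lemma load_vlb_routing (D : int -> 'I_N -> 'I_N -> R) e :
  (forall t a b, 0 <= D t a b) ->
  load torus_sched (induced_flow vlb_routing D) e =
  \esum_(y in [set: 'I_N * 'I_N * int]) (N%:R^-1 * \sum_(x : torus) D y.2 y.1.1 y.1.2 *
     (e \in path_edges torus_sched (vlb_path y.1.1 y.1.2 y.2 x))%:R)%:E.
Proof.
move=> D_ge0; rewrite /load /induced_flow exchange_esum => [|P y]; last first.
  by rewrite lee_fin mulr_ge0 ?vlb_routing_ge0.
apply: eq_esum => -[[a b] t0] _ /=.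
under eq_esum do rewrite /vlb_routing mulr_sumr (eq_bigr _ (fun x _ => mulrA _ _ _)).
rewrite esum_point_masses => [|x]; last by rewrite mulr_ge0 ?invr_ge0.
rewrite mulr_sumr; congr _%:E; apply: eq_bigr => x _.
rewrite [in RHS]mulrA [_ * D _ _ _]mulrC; congr (_ * _%:R).
by rewrite mem_setE.
Qed.

Lemma vlb_routing_feasible (D : int -> 'I_N -> 'I_N -> R) (r : R) :
  2 * h%:R * r <= 1 -> demand_at_most D r ->
  feasible torus_sched (induced_flow vlb_routing D).
Proof.
move=> hr_le [D_ge0 D_row D_col] i t.
have r_ge0 : 0 <= r.
  by apply: le_trans (D_row 0 (node 0)); apply: sumr_ge0 => b _; apply: D_ge0.
pose g (p : 'I_(period + period) * ('I_N * 'I_N)) := (p.2.1, p.2.2, t - p.1%:Z).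
have g_inj : injective g.
  move=> [k1 [a1 b1]] [k2 [a2 b2]] [-> -> /addrI /oppr_inj [k_eq]].
  by congr (_, _); apply: val_inj.
rewrite load_vlb_routing // (esum_finite_support g_inj) => [||[[a b] t0] g_out]; first last.
- rewrite big1 ?mulr0 // => x _; case E : (_ \in _); rewrite ?mulr0 //.
  have [k k_lt t0_eq] := vlb_path_edge_delay E.
  by case: g_out; exists (Ordinal k_lt, (a, b)) => //; rewrite /g /= -t0_eq.
- by move=> y; rewrite lee_fin mulr_ge0 ?invr_ge0 ?sumr_ge0 // => x _; rewrite mulr_ge0.
rewrite sumEFin lee_fin -mulr_sumr.
rewrite (_ : \sum_(p : 'I_(period + period) * ('I_N * 'I_N)) _ =
  \sum_(k < period + period) \sum_a \sum_b \sum_(x : torus) D (t - k%:Z) a b *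
    ((i, t, true) \in path_edges torus_sched (vlb_path a b (t - k%:Z) x))%:R); last first.
  by under [RHS]eq_bigr do rewrite pair_bigA; rewrite [RHS]pair_bigA.
apply: (@le_trans _ _ (N%:R^-1 * \sum_(k < period + period) r * #|[pred x | uses_hop t x]|%:R)).
  apply: ler_wpM2l; first by rewrite invr_ge0.
  by apply: ler_sum => k _; apply: load_at_delay_le.
have c_gt0 : (0 < #|[pred x | uses_hop t x]|)%N.
  by move: card_torus_gt0; rewrite -(card_uses_hop t) muln_gt0 => /andP [].
rewrite sumr_const card_ord -[_ *+ (_ + _)]mulr_natr /period natrD natrM.
rewrite -(card_uses_hop t) natrM [leLHS](_ : _ = 2 * h%:R * r) //; field.
by rewrite nat1r !pnatr_eq0 -!lt0n c_gt0.
Qed.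

End Routing.

End TorusDesign.

(* The constant 2 / e^(1/h) makes 2hm equal to 2 h (e N)^(1/h), as N^(1/h) = m. *)
Lemma period_le_Lstar (R : realType) h' m' (e : R) : 0 < e ->
  ((period h' m' + period h' m')%:R : R) <= 2 / e `^ (h'.+1%:R^-1) *
   (h'.+1%:R * (#|torus h' m'|%:R `^ (h'.+2%:R^-1) + (e * #|torus h' m'|%:R) `^ (h'.+1%:R^-1))).
Proof.
move=> e_gt0; have e_root_gt0 : 0 < e `^ (h'.+1%:R^-1) by apply: powR_gt0.
have root_N : (#|torus h' m'|%:R : R) `^ (h'.+1%:R^-1) = m'.+1%:R.
  by rewrite card_torus natrX -powR_mulrn // -powRrM mulfV ?powRr1.
rewrite powRM ?(ltW e_gt0) // root_N /period natrD natrM.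
rewrite -[leLHS](_ : 2 / e `^ (h'.+1%:R^-1) * (h'.+1%:R * (e `^ (h'.+1%:R^-1) * m'.+1%:R)) = _).
  apply: ler_wpM2l; first by rewrite divr_ge0 // ltW.
  by apply: ler_wpM2l => //; rewrite lerDr powR_ge0.
by field; rewrite gt_eqF.
Qed.

Section ThroughputParameters.
Variable R : realType.
Implicit Type r : R.

Lemma hr_gt0 r : 0 < r -> r <= 2^-1 -> (0 < hr r)%N.
Proof.
move=> r_gt0 r_le; rewrite /hr truncn_gt0.
by rewrite ler_pdivlMr ?mulr_gt0 // mul1r; lra.
Qed.

Lemma epsr_gt0 r : 0 < epsr r.
Proof. by rewrite /epsr; have := truncnS_gt (1 / (2 * r)); rewrite -/(hr r) -natr1; lra. Qed.

Lemma hr_throughput r : 0 < r -> 2 * (hr r)%:R * r <= 1.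
Proof.
move=> r_gt0; have r2_gt0 : 0 < 2 * r by rewrite mulr_gt0.
have h_le : (hr r)%:R <= 1 / (2 * r) by rewrite truncn_le divr_ge0 // ltW.
by rewrite mulrAC mulrC -ler_pdivlMr.
Qed.

End ThroughputParameters.

Theorem theorem4 (R : realType) (r : R) :
  0 < r -> r <= 2^-1 ->
  exists C : R, 0 < C /\
    forall M : nat, exists N : nat, (M < N)%N /\
      exists (T : nat) (sched : int -> {perm 'I_N})
             (Rt : 'I_N -> 'I_N -> int -> vpath N -> R),
        [/\ is_ORN_design T sched Rt,
            guarantees_throughput sched Rt r &
            max_latency_le Rt (C * Lstar r N)].
Proof.
move=> r_gt0 r_le; set h' := (hr r).-1.
have h_eq : hr r = h'.+1 by rewrite prednK // hr_gt0.
exists (2 / epsr r `^ ((hr r)%:R^-1)); split; first by rewrite divr_gt0 ?powR_gt0 ?epsr_gt0.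
move=> M; exists #|torus h' M|; split.
  by rewrite card_torus expnS (leq_trans _ (leq_pmulr _ _)) // expn_gt0.
exists (period h' M), (@torus_sched h' M), (@vlb_routing h' M R); split.
- exact: torus_is_ORN_design.
- by move=> D; apply: vlb_routing_feasible; rewrite -h_eq hr_throughput.
- move=> a b t P R_gt0; apply: le_trans (vlb_routing_latency R_gt0) _.
  by rewrite /Lstar h_eq period_le_Lstar ?epsr_gt0.
Qed.
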